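(* Every conditional space $\mathfrak{X}=\langle X,\tau,T\rangle$ is isomorphic to the expanded Stone space $\langle\mathrm{Ul}(\mathrm{Clop}(\tau)),\tau_s,T_{\mathrm{Clop}(\tau)}\rangle$ of the conditional algebra $\langle\mathrm{Clop}(\tau),\to_T\rangle$, via the map $\varepsilon\colon X\to\mathrm{Ul}(\mathrm{Clop}(\tau))$, $\varepsilon(x)=\{U\in\mathrm{Clop}(\tau):x\in U\}$; that is, $\varepsilon$ is a homeomorphism and for all $x,y\in X$ and $Z\subseteq X$, $T(x,Z,y)$ iff $T_{\mathrm{Clop}(\tau)}(\varepsilon(x),\varepsilon[Z],\varepsilon(y))$.
   Context: A conditional space is a triple $\langle X,\tau,T\rangle$ where $\langle X,\tau\rangle$ is a Boolean (compact, Hausdorff, zero-dimensional) space and $T\subseteq X\times\mathcal{C}(\tau)\times X$ ($\mathcal{C}(\tau)$ the closed sets, $\mathrm{Clop}(\tau)$ the clopen sets) satisfies: (T1) for every $x$ and closed $Y$, $T(x,Y)=\{y:T(x,Y,y)\}$ is closed; (T2) for all clopen $U,V$, $U\to_T V=\{x:\text{for all closed } Z\subseteq U,\ T(x,Z)\subseteq V\}$ is clopen; (T3) for closed $Y$: $T(x,Y,y)$ iff $T(x,U,y)$ for all clopen $U\supseteq Y$. Then $\langle\mathrm{Clop}(\tau),\to_T\rangle$ is a conditional algebra. For a conditional algebra $\langle A,\to\rangle$ (Boolean algebra $A$ with $a\to1=1$, $(a\to b)\wedge(a\to c)=a\to(b\wedge c)$, $(a\vee b)\to c\le(a\to c)\wedge(b\to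 c)$): $\mathrm{Ul}(A)$ is its Stone space with topology $\tau_s$; filters include $A$ itself; $\varphi(F)=\{u:F\subseteq u\}$; $D^{\to}_u(F)=\{b:\exists a\in F,\ a\to b\in u\}$; and $T_A(u,Z,v)$ iff there is a filter $F$ with $Z=\varphi(F)$ and $D^{\to}_u(F)\subseteq v$. *)

From mathcomp Require Import all_boot all_order.
From mathcomp Require Import all_classical all_reals all_analysis.
Set Implicit Arguments. Unset Strict Implicit. Unset Printing Implicit Defensive.
Local Open Scope classical_set_scope.

Definition clopen_base (X : topologicalType) : Prop :=
  forall (O : set X) (x : X), open O -> O x ->
    exists U : set X, [/\ clopen U, U x & U `<=` O].

Definition boolean_space (X : topologicalType) : Prop :=
  [/\ compact [set: X], hausdorff_space X & clopen_base X].

Definition Tsec (X : Type) (T : X -> set X -> X -> Prop) (x : X) (Y : set X)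
  : set X := [set y | T x Y y].

Definition impT (X : topologicalType) (T : X -> set X -> X -> Prop)
  (U V : set X) : set X :=
  [set x | forall Z : set X, closed Z -> Z `<=` U -> Tsec T x Z `<=` V].

(* A conditional space <X, tau, T> ; T is a ternary relation on
   X x C(tau) x X, encoded as a predicate on X * set X * X which only
   holds for closed middle arguments. *)
Definition conditional_space (X : topologicalType)
  (T : X -> set X -> X -> Prop) : Prop :=
  [/\ boolean_space X,
      (forall x Y y, T x Y y -> closed Y),
      (forall x Y, closed Y -> closed (Tsec T x Y)),
      (forall U V, clopen U -> clopen V -> clopen (impT T U V)) &
      (forall x Y y, closed Y ->
                  (T x Y y <-> forall U, clopen U -> Y `<=` U -> T x U y))].

(* Filters of Clop(tau) (the improper filter Clop(tau) itself included). *)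
Definition clop_filter (X : topologicalType) (F : set (set X)) : Prop :=
  [/\ F `<=` clopen,
      F [set: X],
      (forall a b, F a -> F b -> F (a `&` b)) &
      (forall a b, F a -> clopen b -> a `<=` b -> F b)].

Definition clop_proper_filter (X : topologicalType) (F : set (set X)) : Prop :=
  clop_filter F /\ ~ F set0.

Definition clop_ultrafilter (X : topologicalType) (u : set (set X)) : Prop :=
  clop_proper_filter u /\
  (forall G, clop_proper_filter G -> u `<=` G -> G = u).

Definition phi (X : topologicalType) (F : set (set X)) : set (set (set X)) :=
  [set u | clop_ultrafilter u /\ F `<=` u].

Definition Dimp (X : topologicalType) (T : X -> set X -> X -> Prop)
  (u : set (set X)) (F : set (set X)) : set (set X) :=
  [set b | clopen b /\ exists2 a, F a & u (impT T a b)].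

Definition TA (X : topologicalType) (T : X -> set X -> X -> Prop)
  (u : set (set X)) (Z : set (set (set X))) (v : set (set X)) : Prop :=
  exists F : set (set X), [/\ clop_filter F, Z = phi F & Dimp T u F `<=` v].

(* Stone topology tau_s on Ul(Clop(tau)): generated by the basic sets
   {u in Ul : a in u}, a clopen. S is open iff S <= Ul and every point of S
   has a basic neighbourhood contained in S. *)
Definition stone_open (X : topologicalType) (S : set (set (set X))) : Prop :=
  S `<=` @clop_ultrafilter X /\
  forall u, S u -> exists2 a, u a /\ clopen a &
    [set v | clop_ultrafilter v /\ v a] `<=` S.

Definition eps (X : topologicalType) (x : X) : set (set X) :=
  [set U | clopen U /\ U x].

Definition stone_homeomorphism (X : topologicalType)
  (f : X -> set (set X)) : Prop :=
  [/\ (forall x, clop_ultrafilter (f x)),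
      injective f,
      (forall u, clop_ultrafilter u -> exists x, f x = u),
      (forall S, stone_open S -> open (f @^-1` S)) &
      (forall O : set X, open O -> stone_open (f @` O))].

From mathcomp Require Import all_boot all_order.
From mathcomp Require Import all_classical all_reals all_analysis.
Local Open Scope classical_set_scope.

(* The clopens of a Boolean space separate points from closed sets, so [eps]
   is injective; by compactness every ultrafilter of clopens, a directed
   family of closed sets, has a point in its intersection, so [eps] is onto.
   It is a homeomorphism because clopens are basic open sets on both sides.
   Closed sets [Z] and filters [F] of clopens correspond through
   [Z = \bigcap F], i.e. [phi F = eps[Z]].  By (T3), [T(x,Z,y)] depends only
   on the clopen supersets [U] of [Z], and by compactness each such [U]
   contains a member of [F]; this is what [D_u(F)] quantifies over. *)

Lemma image_injective {aT rT : Type} {f : aT -> rT} {A B : set aT} :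
  injective f -> f @` A = f @` B -> A = B.
Proof.
move=> f_inj eAB; apply/seteqP; split=> a.
  by rewrite -[A a](image_inj f_inj) eAB image_inj.
by rewrite -[B a](image_inj f_inj) -eAB image_inj.
Qed.

Section Compactness.
Variable X : topologicalType.
Hypothesis X_compact : compact [set: X].

Lemma compact_directed_meet (G : set (set X)) (K : set X) :
  (forall a, G a -> closed a) -> closed K -> G !=set0 ->
  (forall a b, G a -> G b -> exists2 c, G c & c `<=` a `&` b) ->
  (forall a, G a -> K `&` a !=set0) ->
  exists x, K x /\ forall a, G a -> a x.
Proof.
move=> G_closed K_closed [a0 Ga0] G_directed G_meetK.
have F_filter : Filter (filter_from G (fun a => K `&` a)).
  apply: filter_from_filter; first by exists a0.
  move=> a b Ga Gb; have [c Gc cab] := G_directed _ _ Ga Gb.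
  by exists c => // x [Kx /cab [? ?]].
have F_proper := filter_from_proper F_filter G_meetK.
have [|x [_ x_cluster]] := X_compact _ F_proper; first by exists a0 => // x [].
have KGx : forall a, G a -> (K `&` a) x.
  move=> a Ga; apply: (closedI K_closed (G_closed _ Ga)) => B xB.
  by apply: x_cluster => //; exists a.
by exists x; split=> [|a /KGx []]; case: (KGx _ Ga0).
Qed.

Lemma compact_directed_subset_open (G : set (set X)) (O : set X) :
  (forall a, G a -> closed a) -> G !=set0 ->
  (forall a b, G a -> G b -> exists2 c, G c & c `<=` a `&` b) ->
  open O -> (forall x, (forall a, G a -> a x) -> O x) ->
  exists2 a, G a & a `<=` O.
Proof.
move=> G_closed G_nonempty G_directed O_open meet_in_O.
apply: contrapT => no_a.
have [||x [nOx Gx]] :=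
  compact_directed_meet G (~` O) G_closed _ G_nonempty G_directed.
- by rewrite closedC.
- move=> a Ga; apply/set0P/negP => /eqP aO.
  apply: no_a; exists a => // x ax; apply: contrapT => nOx.
  by have : (~` O `&` a) x by []; rewrite aO.
- by apply: nOx; apply: meet_in_O.
Qed.

End Compactness.

Definition clopen_supsets {X : topologicalType} (Z : set X) : set (set X) :=
  [set U | clopen U /\ Z `<=` U].

Section BooleanSpace.
Variable X : topologicalType.
Hypothesis X_boolean : boolean_space X.

Lemma clop_filter_clopen_supsets (Z : set X) : clop_filter (clopen_supsets Z).
Proof.
split.
- by move=> U [].
- by split=> //; exact: clopenT.
- by move=> a b [ca Za] [cb Zb]; split; [exact: clopenI | move=> z Zz; split; auto].
- by move=> a b [ca Za] cb ab; split=> //; apply: subset_trans ab.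
Qed.

Lemma clop_filter_directed (F : set (set X)) : clop_filter F ->
  forall a b, F a -> F b -> exists2 c, F c & c `<=` a `&` b.
Proof. by move=> [_ _ FI _] a b Fa Fb; exists (a `&` b) => //; apply: FI. Qed.

Lemma clop_filter_subset_open {F : set (set X)} {U : set X} :
  clop_filter F -> open U -> \bigcap_(a in F) a `<=` U ->
  exists2 a, F a & a `<=` U.
Proof.
have [X_compact _ _] := X_boolean.
move=> F_filter U_open FU; have [F_clopen FT _ _] := F_filter.
apply: (compact_directed_subset_open _ X_compact F U) U_open FU.
- by move=> a /F_clopen [].
- by exists setT.
- exact: clop_filter_directed.
Qed.

Lemma clopen_separates_points {x y : X} : x <> y ->
  exists2 U, clopen U & U x /\ ~ U y.
Proof.
have [_ X_hausdorff X_base] := X_boolean.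
move=> /eqP /(hausdorff_accessible X_hausdorff) [A [oA]].
rewrite !inE => Ax nAy.
have [U [cU Ux UA]] := X_base A x oA Ax.
by exists U => //; split=> // /UA.
Qed.

Lemma clopen_separates_closed {C : set X} {y : X} : closed C -> ~ C y ->
  exists2 b, clopen b & C `<=` b /\ ~ b y.
Proof.
move=> C_closed nCy.
have [|a [ca ay] anC] := clop_filter_subset_open
  (clop_filter_clopen_supsets [set y]) (closed_openC C_closed).
  move=> x all_x Cx; have [yx|/clopen_separates_points [U cU [Uy nUx]]] :=
    pselect (y = x); first by apply: nCy; rewrite yx.
  by apply/nUx/(all_x U); split=> // _ ->.
exists (~` a); first exact: clopenC.
by split=> [x Cx ax|]; [exact: anC ax Cx | apply; apply: ay].
Qed.

Lemma bigcap_clopen_supsets (Z : set X) : closed Z ->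
  \bigcap_(U in clopen_supsets Z) U = Z.
Proof.
move=> Z_closed; apply/seteqP; split=> [z all_z|z Zz U [_ ZU]]; last exact: ZU.
apply: contrapT => nZz; have [b cb [Zb nbz]] := clopen_separates_closed Z_closed nZz.
by apply/nbz/(all_z b).
Qed.

Lemma clop_ultrafilter_eps (x : X) : clop_ultrafilter (eps x).
Proof.
split; first split; first split.
- by move=> U [].
- by split=> //; exact: clopenT.
- by move=> a b [ca ax] [cb bx]; split; [exact: clopenI|].
- by move=> a b [ca ax] cb ab; split=> //; exact: ab.
- by case.
move=> G [[G_clopen _ GI G_up] nG0] epsG; apply/seteqP; split=> // a Ga.
split; first exact: G_clopen.
apply: contrapT => nax.
have Gna : G (~` a) by apply: epsG; split=> //; exact/clopenC/G_clopen.
by apply: nG0; rewrite -(setICr a); apply: GI.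
Qed.

Lemma eps_injective : injective (@eps X).
Proof.
move=> x y exy; apply: contrapT => /clopen_separates_points [U cU [Ux nUy]].
by have : eps x U by [] ; rewrite exy => -[].
Qed.

Lemma eps_surjective {u : set (set X)} : clop_ultrafilter u ->
  exists x, eps x = u.
Proof.
have [X_compact _ _] := X_boolean.
move=> [[[u_clopen uT uI _] nu0] u_max].
have [||||x [_ ux]] := compact_directed_meet _ X_compact u setT _ closedT.
- by move=> a /u_clopen [].
- by exists setT.
- by move=> a b ua ub; exists (a `&` b) => //; apply: uI.
- move=> a ua; rewrite setTI; apply/set0P/eqP => a0.
  by apply: nu0; rewrite -a0.
exists x; apply: u_max; first by case: (clop_ultrafilter_eps x).
by move=> a ua; split; [exact: u_clopen | exact: ux].
Qed.

Lemma phi_eq_eps_bigcap (F : set (set X)) : clop_filter F ->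
  phi F = @eps X @` \bigcap_(a in F) a.
Proof.
move=> [F_clopen _ _ _]; apply/seteqP; split=> [u [u_ultra Fu]|_ [z Fz <-]].
  have [z ezu] := eps_surjective u_ultra.
  by exists z => // a Fa; move: (Fu a Fa); rewrite -ezu => -[].
split; first exact: clop_ultrafilter_eps.
by move=> a Fa; split; [exact: F_clopen | exact: Fz].
Qed.

Lemma stone_homeomorphism_eps : stone_homeomorphism (@eps X).
Proof.
have [_ _ X_base] := X_boolean.
split.
- exact: clop_ultrafilter_eps.
- exact: eps_injective.
- by move=> u /eps_surjective.
- move=> S [_ S_basic]; rewrite openE => x Sx.
  have [a [[ca ax] _] aS] := S_basic _ Sx.
  apply: (@filterS _ _ _ a); last by apply: open_nbhs_nbhs; split; [case: ca|].
  by move=> t at'; apply: aS; split; [exact: clop_ultrafilter_eps | split].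
- move=> O O_open; split=> [_ [x _ <-]|_ [x Ox <-]].
    exact: clop_ultrafilter_eps.
  have [a [ca ax aO]] := X_base O x O_open Ox.
  exists a; first by split=> //; split.
  move=> v [v_ultra va]; have [z ezv] := eps_surjective v_ultra.
  by exists z => //; apply: aO; move: va; rewrite -ezv => -[].
Qed.

End BooleanSpace.

Section ConditionalRelation.
Variables (X : topologicalType) (T : X -> set X -> X -> Prop).
Hypothesis X_boolean : boolean_space X.
Hypothesis T_closed : forall x Y y, T x Y y -> closed Y.
Hypothesis Tsec_closed : forall x Y, closed Y -> closed (Tsec T x Y).
Hypothesis impT_clopen :
  forall U V, clopen U -> clopen V -> clopen (impT T U V).
Hypothesis T_clopen_supsets : forall x Y y, closed Y ->
  (T x Y y <-> forall U, clopen U -> Y `<=` U -> T x U y).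

Lemma Tsec_subset (x : X) (Y Y' : set X) : closed Y -> closed Y' ->
  Y `<=` Y' -> Tsec T x Y `<=` Tsec T x Y'.
Proof.
move=> cY cY' YY' y /(T_clopen_supsets x Y y cY) TY.
by apply/T_clopen_supsets => // U cU Y'U; apply: TY => //; apply: subset_trans Y'U.
Qed.

Lemma T_sub_TA (x y : X) (Z : set X) :
  T x Z y -> TA T (eps x) (@eps X @` Z) (eps y).
Proof.
move=> Txy; have Z_closed := T_closed _ _ _ Txy.
exists (clopen_supsets Z); split.
- exact: clop_filter_clopen_supsets.
- by rewrite phi_eq_eps_bigcap ?bigcap_clopen_supsets //;
    exact: clop_filter_clopen_supsets.
- move=> b [cb [a [_ Za] [_ x_ab]]]; split=> //.
  exact: x_ab Z Z_closed Za y Txy.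
Qed.

Lemma TA_sub_T (x y : X) (Z : set X) :
  TA T (eps x) (@eps X @` Z) (eps y) -> T x Z y.
Proof.
move=> [F [F_filter epsZ DF_y]]; have [F_clopen _ _ _] := F_filter.
have Z_bigcap : Z = \bigcap_(a in F) a.
  apply: (image_injective (eps_injective _ X_boolean)).
  by rewrite epsZ phi_eq_eps_bigcap.
have Z_closed : closed Z by rewrite Z_bigcap; apply: closed_bigI => a /F_clopen [].
apply/T_clopen_supsets => // U [U_open U_closed] ZU; apply: contrapT => nTU.
have [b cb [Tb nby]] := clopen_separates_closed _ X_boolean (Tsec_closed x U U_closed) nTU.
move: ZU; rewrite Z_bigcap => /(clop_filter_subset_open _ X_boolean F_filter U_open).
move=> [a Fa aU].
have x_ab : impT T a b x.
  move=> Z' cZ' Z'a; apply: subset_trans Tb.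
  by apply: Tsec_subset => //; apply: subset_trans aU.
apply: nby; suff [] : eps y b by [].
apply: DF_y; split=> //; exists a => //; split=> //.
exact: impT_clopen (F_clopen _ Fa) cb.
Qed.

End ConditionalRelation.

Theorem theorem5p8 (X : topologicalType) (T : X -> set X -> X -> Prop) :
  conditional_space T ->
  stone_homeomorphism (@eps X) /\
  (forall (x y : X) (Z : set X), T x Z y <-> TA T (eps x) (@eps X @` Z) (eps y)).
Proof.
move=> [X_boolean T_closed Tsec_closed impT_clopen T_clopen_supsets].
split; first exact: stone_homeomorphism_eps.
move=> x y Z; split; first exact: T_sub_TA.
exact: TA_sub_T.
Qed.
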